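(* For a twisted $n$-gon with corner invariants $(x_0,\dots,x_{2n-1})$ define $$\mathcal{F}_1=\prod_{i=0}^{n-1}\frac{x_{2i}}{x_{2i}-1},\quad \mathcal{F}_2=\prod_{i=0}^{n-1}\frac{x_{2i+1}}{x_{2i+1}-1},\quad \mathcal{F}_3=\prod_{i=0}^{n-1}\frac{x_{2i}}{x_{2i+1}},\quad \mathcal{F}_4=\prod_{i=0}^{n-1}\frac{1-x_{2i}}{1-x_{2i+1}}.$$ Each $\mathcal{F}_j$ ($j=1,2,3,4$) is invariant under $T_3$ (and hence under $T_3^{-1}$): if $[P]$ and $T_3[P]$ are defined and $\mathcal{F}_j$ is defined (finite, with nonzero denominators) at both, then $\mathcal{F}_j(T_3[P])=\mathcal{F}_j([P])$. Equivalently, each $\mathcal{F}_j$ is invariant under the rational map $x\mapsto x'$ given by $x'_{2i}=x_{2i-2}\frac{x_{2i-4}+x_{2i-1}-1}{x_{2i-2}x_{2i-1}-(1-x_{2i+1})(1-x_{2i-4})}$, $x'_{2i+1}=x_{2i+3}\frac{x_{2i+2}+x_{2i+5}-1}{x_{2i+2}x_{2i+3}-(1-x_{2i+5})(1-x_{2i})}$ (indices mod $2n$).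
   Context: A twisted $n$-gon is a map $P:\mathbb{Z}\to\mathbb{RP}^2$ with every three consecutive points non-collinear and $P_{i+n}=M(P_i)$ for a fixed $M\in\mathrm{PGL}_3(\mathbb{R})$; $\mathcal{P}_n$ is the set of classes modulo projective equivalence. $T_3$ maps a $3$-nice ($P_i,P_{i+1},P_{i+3},P_{i+4}$ in general position for all $i$) twisted $n$-gon $P$ to $P'$ with $P'_i=P_iP_{i+3}\cap P_{i+1}P_{i+4}$; relabelling indices does not change the $\mathcal{F}_j$. Inverse cross ratio: for four collinear points $A,B,C,D$, map their line projectively to the $x$-axis with coordinates $a,b,c,d$ and set $\chi(A,B,C,D)=\frac{(a-b)(c-d)}{(a-c)(b-d)}$ (value in $\mathbb{R}\cup\{\infty\}$, projectively invariant). Corner invariants: $x_{2i}=\chi(P_{i-2},P_{i-1},P_{i-2}P_{i-1}\cap P_iP_{i+1},P_{i-2}P_{i-1}\cap P_{i+1}P_{i+2})$ and $x_{2i+1}=\chi(P_{i+2},P_{i+1},P_{i+2}P_{i+1}\cap P_iP_{i-1},P_{i+2}P_{i+1}\cap P_{i-1}P_{i-2})$, with $x_{j+2n}=x_j$. *)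

(* Points of RP^2 are represented by homogeneous coordinate
   column vectors in R^3 (nonzero vectors; all notions below are invariant
   under rescaling of representatives and under projective transformations). *)
From HB Require Import structures.
From mathcomp Require Import all_boot all_order all_algebra.
Set Implicit Arguments. Unset Strict Implicit. Unset Printing Implicit Defensive.
Import Order.TTheory GRing.Theory Num.Theory.
Local Open Scope ring_scope.

Section Proj.
Variable R : realFieldType.
Notation vec := 'cV[R]_3.

Definition dotv (u v : vec) : R := \sum_(i < 3) u i 0 * v i 0.

(* cross product: the line through two points / the intersection of two lines *)
Definition cross (u v : vec) : vec :=
  \col_(i < 3)
    (if i == 0 :> nat then u 1 0 * v 2 0 - u 2 0 * v 1 0
     else if i == 1 :> nat then u 2 0 * v 0 0 - u 0 0 * v 2 0
     else u 0 0 * v 1 0 - u 1 0 * v 0 0).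

(* triple product = det [a b c]; three points are collinear iff it vanishes *)
Definition det3 (a b c : vec) : R := dotv a (cross b c).

Definition meet (a b c d : vec) : vec := cross (cross a b) (cross c d).

(* Inverse cross ratio of four collinear points A,B,C,D (A <> B) in homogeneous
   coordinates: with O = A x B a point off the line AB, the bracket
   [X,Y] := det(O,X,Y) is (up to a common factor) the 2x2 determinant of
   homogeneous coordinates on the line, i.e. x - y in an affine coordinate.
   Hence chi = (a-b)(c-d)/((a-c)(b-d)) = num / den below. *)
Definition cr_num (A B C D : vec) : R :=
  let O := cross A B in det3 O A B * det3 O C D.
Definition cr_den (A B C D : vec) : R :=
  let O := cross A B in det3 O A C * det3 O B D.
Definition chi (A B C D : vec) : R := cr_num A B C D / cr_den A B C D.
Definition chi_finite (A B C D : vec) : Prop := cr_den A B C D != 0.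

Definition twisted_ngon (n : nat) (P : int -> vec) : Prop :=
  (exists M : 'M[R]_3, M \in unitmx /\
     forall i : int, exists c : R, c != 0 /\ P (i + n%:Z) = c *: (M *m P i))
  /\ forall i : int, det3 (P i) (P (i + 1)) (P (i + 2)) != 0.

Definition nice3 (P : int -> vec) : Prop :=
  forall i : int,
    [/\ det3 (P i) (P (i + 1)) (P (i + 3)) != 0,
        det3 (P i) (P (i + 1)) (P (i + 4)) != 0,
        det3 (P i) (P (i + 3)) (P (i + 4)) != 0 &
        det3 (P (i + 1)) (P (i + 3)) (P (i + 4)) != 0].

Definition T3 (P : int -> vec) : int -> vec :=
  fun i => meet (P i) (P (i + 3)) (P (i + 1)) (P (i + 4)).

(* arguments of the corner invariants x_{2i} and x_{2i+1} *)
Definition xe_args (P : int -> vec) (i : int) :=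
  (P (i - 2), P (i - 1),
   meet (P (i - 2)) (P (i - 1)) (P i) (P (i + 1)),
   meet (P (i - 2)) (P (i - 1)) (P (i + 1)) (P (i + 2))).
Definition xo_args (P : int -> vec) (i : int) :=
  (P (i + 2), P (i + 1),
   meet (P (i + 2)) (P (i + 1)) (P i) (P (i - 1)),
   meet (P (i + 2)) (P (i + 1)) (P (i - 1)) (P (i - 2))).

Definition app4 {T} (f : vec -> vec -> vec -> vec -> T)
  (a : vec * vec * vec * vec) : T :=
  let: (A, B, C, D) := a in f A B C D.

Definition xe (P : int -> vec) (i : int) : R := app4 chi (xe_args P i).
Definition xo (P : int -> vec) (i : int) : R := app4 chi (xo_args P i).
Definition xe_fin (P : int -> vec) (i : int) : Prop := app4 chi_finite (xe_args P i).
Definition xo_fin (P : int -> vec) (i : int) : Prop := app4 chi_finite (xo_args P i).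

Definition F1 (n : nat) P : R := \prod_(i < n) (xe P i / (xe P i - 1)).
Definition F2 (n : nat) P : R := \prod_(i < n) (xo P i / (xo P i - 1)).
Definition F3 (n : nat) P : R := \prod_(i < n) (xe P i / xo P i).
Definition F4 (n : nat) P : R := \prod_(i < n) ((1 - xe P i) / (1 - xo P i)).

Definition F1_def (n : nat) P : Prop :=
  forall i : 'I_n, xe_fin P i /\ xe P i - 1 != 0.
Definition F2_def (n : nat) P : Prop :=
  forall i : 'I_n, xo_fin P i /\ xo P i - 1 != 0.
Definition F3_def (n : nat) P : Prop :=
  forall i : 'I_n, [/\ xe_fin P i, xo_fin P i & xo P i != 0].
Definition F4_def (n : nat) P : Prop :=
  forall i : 'I_n, [/\ xe_fin P i, xo_fin P i & 1 - xo P i != 0].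

End Proj.

(* The corner invariants are ratios of brackets [a b c] = det(a, b, c) of vertices.  Two
   consecutive vertices T_j, T_(j+1) of T3 P both lie on the diagonal P_(j+1) P_(j+4), so every
   bracket of T3 P factors into brackets of P.  Using this, each factor of F_j at T3 P equals the
   corresponding factor at P times h(i+1) / h(i), where h(i) is an explicit ratio of brackets of
   P_(i-2), ..., P_(i+5).  Such a ratio has degree zero in every vertex, so it is unchanged by the
   monodromy and by rescaling homogeneous coordinates; hence h is n-periodic and the product of
   the h(i+1) / h(i) over a period is 1. *)

From HB Require Import structures.
From mathcomp Require Import all_boot all_order all_algebra.
From mathcomp Require Import ring zify.
Set Implicit Arguments. Unset Strict Implicit. Unset Printing Implicit Defensive.
Import Order.TTheory GRing.Theory Num.Theory.
Local Open Scope ring_scope.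

Notation "n .+5" := (S n.+4) (at level 2, left associativity, format "n .+5") : nat_scope.
Notation "n .+6" := (S n.+5) (at level 2, left associativity, format "n .+6") : nat_scope.
Notation "n .+7" := (S n.+6) (at level 2, left associativity, format "n .+7") : nat_scope.
Notation "n .+8" := (S n.+7) (at level 2, left associativity, format "n .+8") : nat_scope.

Section Coordinates.
Variable R : realFieldType.
Implicit Types (a b c u v : 'cV[R]_3).

Lemma sum_ord3 (g : 'I_3 -> R) : \sum_(i < 3) g i = g 0 + g 1 + g 2.
Proof.
rewrite !big_ord_recl big_ord0 addr0 addrA.
by congr (g _ + g _ + g _); apply: val_inj.
Qed.

Lemma col3P u v : u 0 0 = v 0 0 -> u 1 0 = v 1 0 -> u 2 0 = v 2 0 -> u = v.
Proof.
move=> e0 e1 e2; apply/matrixP=> i j; rewrite (ord1 j).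
by case: i => [[|[|[|//]]] lti];
  [rewrite (_ : Ordinal lti = 0) | rewrite (_ : Ordinal lti = 1) | rewrite (_ : Ordinal lti = 2)];
  try apply: val_inj.
Qed.

Lemma dotvE u v : dotv u v = u 0 0 * v 0 0 + u 1 0 * v 1 0 + u 2 0 * v 2 0.
Proof. exact: sum_ord3. Qed.

Lemma crossE0 u v : cross u v 0 0 = u 1 0 * v 2 0 - u 2 0 * v 1 0.
Proof. by rewrite mxE. Qed.
Lemma crossE1 u v : cross u v 1 0 = u 2 0 * v 0 0 - u 0 0 * v 2 0.
Proof. by rewrite mxE. Qed.
Lemma crossE2 u v : cross u v 2 0 = u 0 0 * v 1 0 - u 1 0 * v 0 0.
Proof. by rewrite mxE. Qed.

Lemma det3E a b c : det3 a b c =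
  a 0 0 * (b 1 0 * c 2 0 - b 2 0 * c 1 0) + a 1 0 * (b 2 0 * c 0 0 - b 0 0 * c 2 0)
  + a 2 0 * (b 0 0 * c 1 0 - b 1 0 * c 0 0).
Proof. by rewrite /det3 dotvE crossE0 crossE1 crossE2. Qed.

End Coordinates.

Ltac coords := rewrite ?det3E ?dotvE; rewrite ?(crossE0, crossE1, crossE2); rewrite ?mxE.

Section Brackets.
Variable R : realFieldType.
Implicit Types (a b c d e f m o p q r u v w z : 'cV[R]_3).

Lemma det3_swap12 a b c : det3 a b c = - det3 b a c.
Proof. by coords; ring. Qed.
Lemma det3_swap23 a b c : det3 a b c = - det3 a c b.
Proof. by coords; ring. Qed.
Lemma det3_rot a b c : det3 a b c = det3 b c a.
Proof. by coords; ring. Qed.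
Lemma det3_dup12 a b : det3 a a b = 0.
Proof. by coords; ring. Qed.
Lemma det3_dup13 a b : det3 a b a = 0.
Proof. by coords; ring. Qed.
Lemma det3_dup23 a b : det3 a b b = 0.
Proof. by coords; ring. Qed.

Lemma det3_combr (x y : R) c d u v :
  det3 c d (x *: u - y *: v) = x * det3 c d u - y * det3 c d v.
Proof. by coords; ring. Qed.

Lemma det3_comb2 (x1 y1 x2 y2 : R) c d z :
  det3 (x1 *: c - y1 *: d) (x2 *: d - y2 *: c) z = (x1 * x2 - y1 * y2) * det3 c d z.
Proof. by coords; ring. Qed.

Lemma det3Z (x y t : R) u v w : det3 (x *: u) (y *: v) (t *: w) = x * y * t * det3 u v w.
Proof. by coords; ring. Qed.

Lemma dotv_cross a b u : dotv (cross a b) u = det3 a b u.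
Proof. by coords; ring. Qed.

Lemma dotvZr (x : R) u v : dotv u (x *: v) = x * dotv u v.
Proof. by coords; ring. Qed.

Lemma meetE_cd a b c d : meet a b c d = det3 a b d *: c - det3 a b c *: d.
Proof. by apply: col3P; rewrite /meet; coords; ring. Qed.
Lemma meetE_ab a b c d : meet a b c d = det3 c d a *: b - det3 c d b *: a.
Proof. by apply: col3P; rewrite /meet; coords; ring. Qed.

Lemma det3_meet_cd a b x y c d :
  det3 c d (meet a b x y) = det3 a b y * det3 c d x - det3 a b x * det3 c d y.
Proof. by rewrite meetE_cd det3_combr. Qed.
Lemma det3_meet_ab a b x y c d :
  det3 c d (meet a b x y) = det3 x y a * det3 c d b - det3 x y b * det3 c d a.
Proof. by rewrite meetE_ab det3_combr. Qed.

Lemma det3_meet_meet a b c d e f z : det3 (meet a b c d) (meet c d e f) z =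
  (det3 a b d * det3 e f c - det3 a b c * det3 e f d) * det3 c d z.
Proof. by rewrite [meet a b c d]meetE_cd [meet c d e f]meetE_ab det3_comb2. Qed.

Lemma det3_cross_self a b : det3 (cross a b) a b = dotv (cross a b) (cross a b).
Proof. by coords; ring. Qed.
Lemma det3_cross_r o a m :
  det3 o a (cross o m) = dotv o o * dotv a m - dotv o a * dotv o m.
Proof. by coords; ring. Qed.
Lemma cross_cross_l o (m1 m2 : 'cV[R]_3) : cross (cross o m1) (cross o m2) = det3 o m1 m2 *: o.
Proof. by apply: col3P; coords; ring. Qed.
Lemma cross_cross_mid p q r : cross (cross p q) (cross q r) = det3 p q r *: q.
Proof. by apply: col3P; coords; ring. Qed.

Lemma cr_num_meet a b p q r : cr_num a b (meet a b p q) (meet a b q r) =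
  dotv (cross a b) (cross a b) ^+ 2 * (det3 a b q * det3 p q r).
Proof.
rewrite /cr_num /meet /= det3_cross_self.
rewrite [det3 (cross a b) (cross _ _) _]/det3 cross_cross_l dotvZr.
rewrite [det3 (cross a b) _ _]/det3 cross_cross_mid dotvZr !dotv_cross; ring.
Qed.

Lemma cr_den_meet a b p q r : cr_den a b (meet a b p q) (meet a b q r) =
  dotv (cross a b) (cross a b) ^+ 2 * (det3 a p q * det3 b q r).
Proof.
rewrite /cr_den /meet /= !det3_cross_r !dotv_cross det3_dup13 det3_dup23.
by rewrite -/(det3 a p q) -/(det3 b q r); ring.
Qed.

(* [chi a b (ab /\ pq) (ab /\ qr)] in brackets; [chi5_com] is the numerator of [1 - chi]. *)
Definition chi5_num a b p q r := det3 a b q * det3 p q r.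
Definition chi5_den a b p q r := det3 a p q * det3 b q r.
Definition chi5_com a b p q r := det3 q a r * det3 q p b.

Lemma chi_meet a b p q r : dotv (cross a b) (cross a b) != 0 ->
  chi a b (meet a b p q) (meet a b q r) = chi5_num a b p q r / chi5_den a b p q r.
Proof.
move=> nzO; rewrite /chi cr_num_meet cr_den_meet invfM mulrACA mulfV ?mul1r //.
exact: expf_neq0.
Qed.

Lemma chi_finite_meet a b p q r : chi_finite a b (meet a b p q) (meet a b q r) ->
  chi5_den a b p q r != 0.
Proof. by rewrite /chi_finite cr_den_meet mulf_eq0 negb_or => /andP[]. Qed.

Lemma sqr3_eq0 (x y t : R) : x ^+ 2 + y ^+ 2 + t ^+ 2 = 0 -> [/\ x = 0, y = 0 & t = 0].
Proof.
move=> /eqP; rewrite !paddr_eq0 ?addr_ge0 ?sqr_ge0 // !sqrf_eq0.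
by case/andP=> /andP[/eqP-> /eqP->] /eqP->.
Qed.

Lemma dotv_cross_neq0 a b c : det3 a b c != 0 -> dotv (cross a b) (cross a b) != 0.
Proof.
rewrite -dotv_cross; apply: contra => /eqP.
rewrite !dotvE -!expr2 => /sqr3_eq0[-> -> ->].
by rewrite !mul0r !addr0.
Qed.

Lemma chi5_plucker a b p q r :
  chi5_num a b p q r - chi5_den a b p q r = - chi5_com a b p q r.
Proof. by rewrite /chi5_num /chi5_den /chi5_com; coords; ring. Qed.

End Brackets.

Arguments chi5_num {R}.
Arguments chi5_den {R}.
Arguments chi5_com {R}.

Section FieldFractions.
Variable F : fieldType.
Implicit Types x y z t U V W : F.

Lemma divf_div x y z t : x / y / (z / t) = x * t / (y * z).
Proof. by rewrite invf_div mulf_div. Qed.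

Lemma div_div_subr1 U V W : U - V = - W -> V != 0 ->
  U / V / (U / V - 1) = - U / W.
Proof.
move=> UVW V_neq0; have -> : U / V - 1 = - W / V by rewrite -UVW mulrBl divff.
by rewrite invf_div mulf_div [V * _]mulrC -mulf_div divff // mulr1 invrN mulrN mulNr.
Qed.

Lemma subr1_div_ratio U V W (U' V' W' : F) : U - V = - W -> U' - V' = - W' ->
  V != 0 -> V' != 0 -> (1 - U / V) / (1 - U' / V') = W * V' / (V * W').
Proof.
move=> UVW UVW' V_neq0 V'_neq0.
have -> : 1 - U / V = W / V by rewrite -[1](divff V_neq0) -mulrBl -opprB UVW opprK.
have -> : 1 - U' / V' = W' / V' by rewrite -[1](divff V'_neq0) -mulrBl -opprB UVW' opprK.
exact: divf_div.
Qed.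

End FieldFractions.

Section T3Window.
Variable R : realFieldType.
Implicit Types (Q : nat -> 'cV[R]_3) (z : 'cV[R]_3).

Definition T3w Q j := meet (Q j) (Q j.+3) (Q j.+1) (Q j.+4).

Definition lam Q j :=
  det3 (Q j) (Q j.+3) (Q j.+4) * det3 (Q j.+2) (Q j.+5) (Q j.+1)
  - det3 (Q j) (Q j.+3) (Q j.+1) * det3 (Q j.+2) (Q j.+5) (Q j.+4).

Lemma lam_shift Q j : lam (fun i => Q i.+1) j = lam Q j.+1.
Proof. by []. Qed.

(* Both T_j and T_(j+1) lie on the diagonal Q_(j+1) Q_(j+4). *)
Lemma det3_T3w Q j z : det3 (T3w Q j) (T3w Q j.+1) z = lam Q j * det3 (Q j.+1) (Q j.+4) z.
Proof. by rewrite /T3w det3_meet_meet. Qed.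

Lemma det3_T3w_012 Q j : det3 (T3w Q j) (T3w Q j.+1) (T3w Q j.+2) = lam Q j * lam Q j.+1.
Proof. by rewrite det3_T3w /T3w det3_meet_ab /lam; ring. Qed.
Lemma det3_T3w_013 Q j : det3 (T3w Q j) (T3w Q j.+1) (T3w Q j.+3) =
  lam Q j * - (det3 (Q j.+3) (Q j.+6) (Q j.+4) * det3 (Q j.+1) (Q j.+4) (Q j.+7)).
Proof. by rewrite det3_T3w /T3w det3_meet_cd det3_dup23; ring. Qed.
Lemma det3_T3w_014 Q j : det3 (T3w Q j) (T3w Q j.+1) (T3w Q j.+4) =
  lam Q j * (det3 (Q j.+5) (Q j.+8) (Q j.+4) * det3 (Q j.+1) (Q j.+4) (Q j.+7)).
Proof. by rewrite det3_T3w /T3w det3_meet_ab det3_dup23; ring. Qed.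
Lemma det3_T3w_034 Q j : det3 (T3w Q j) (T3w Q j.+3) (T3w Q j.+4) =
  lam Q j.+3 * (det3 (Q j) (Q j.+3) (Q j.+4) * det3 (Q j.+4) (Q j.+7) (Q j.+1)).
Proof. by rewrite det3_rot det3_T3w /T3w det3_meet_cd ?det3_dup12 ?det3_dup13 ?det3_dup23; ring. Qed.
Lemma det3_T3w_023 Q j : det3 (T3w Q j) (T3w Q j.+2) (T3w Q j.+3) =
  lam Q j.+2 * - (det3 (Q j.+1) (Q j.+4) (Q j.+3) * det3 (Q j.+3) (Q j.+6) (Q j)).
Proof. by rewrite det3_rot det3_T3w /T3w det3_meet_ab ?det3_dup12 ?det3_dup13 ?det3_dup23; ring. Qed.
Lemma det3_T3w_134 Q j : det3 (T3w Q j.+1) (T3w Q j.+3) (T3w Q j.+4) =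
  lam Q j.+3 * - (det3 (Q j.+2) (Q j.+5) (Q j.+4) * det3 (Q j.+4) (Q j.+7) (Q j.+1)).
Proof. by rewrite det3_rot det3_T3w /T3w det3_meet_ab ?det3_dup12 ?det3_dup13 ?det3_dup23; ring. Qed.

Record regular_window Q : Prop := RegularWindow {
  rw_nice m : [/\ det3 (Q m) (Q m.+1) (Q m.+3) != 0, det3 (Q m) (Q m.+1) (Q m.+4) != 0,
                 det3 (Q m) (Q m.+3) (Q m.+4) != 0 & det3 (Q m.+1) (Q m.+3) (Q m.+4) != 0];
  rw_consec m : det3 (Q m) (Q m.+1) (Q m.+2) != 0;
  rw_lam m : lam Q m != 0;
  (* 3-niceness at the index just before the window *)
  rw_back : det3 (Q 0%N) (Q 2%N) (Q 3%N) != 0 }.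

End T3Window.

(* Orders the indices of every bracket, so that [field] sees equal brackets as one atom. *)
Ltac sort_brackets := repeat match goal with
 | |- context [det3 (?F ?i) (?F ?j) (?F ?k)] =>
    lazymatch eval vm_compute in (Nat.ltb j i) with
    | true => rewrite (det3_swap12 (F i) (F j) (F k))
    | false => lazymatch eval vm_compute in (Nat.ltb k j) with
       | true => rewrite (det3_swap23 (F i) (F j) (F k))
       end
    end
 end.

Ltac expand_T3w := rewrite ?(det3_T3w_012 _ 0) ?(det3_T3w_012 _ 1) ?(det3_T3w_012 _ 2)
  ?(det3_T3w_013 _ 0) ?(det3_T3w_013 _ 1) ?(det3_T3w_014 _ 0) ?(det3_T3w_034 _ 0)
  ?(det3_T3w_023 _ 0) ?(det3_T3w_134 _ 0).

Ltac split_neq0 := repeat match goal with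
 | H : is_true (_ * _ != 0) |- _ => move: H; rewrite mulf_eq0 negb_or => /andP[? ?]
 | H : is_true (- _ != 0) |- _ => rewrite oppr_eq0 in H
 end.

Ltac regular_facts hQ :=
  have [? ? ? ?] := rw_nice hQ 0; have [? ? ? ?] := rw_nice hQ 1;
  have [? ? ? ?] := rw_nice hQ 2; have [? ? ? ?] := rw_nice hQ 3;
  have [? ? ? ?] := rw_nice hQ 4;
  have ? := rw_consec hQ 0; have ? := rw_consec hQ 1; have ? := rw_consec hQ 2;
  have ? := rw_consec hQ 3; have ? := rw_consec hQ 4; have ? := rw_consec hQ 5;
  have ? := rw_lam hQ 0; have ? := rw_lam hQ 1; have ? := rw_lam hQ 2;
  have ? := rw_lam hQ 3; have ? := rw_back hQ.

Ltac prove_neq0 := rewrite ?mulrN ?mulNr ?opprK ?oppr_eq0;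
  repeat (first [assumption | apply: mulf_neq0 | apply: expf_neq0 | rewrite invr_eq0]).

Ltac field_neq0 := field; repeat (apply/andP; split); assumption.

Section LocalIdentities.
Variable R : realFieldType.
Implicit Types (Q W : nat -> 'cV[R]_3).
Local Notation vec := 'cV[R]_3.

(* x_(2i) and x_(2i+1) read the window P_(i-2), ..., P_(i+2) forwards and backwards. *)
Definition even5 (g : vec -> vec -> vec -> vec -> vec -> R) W :=
  g (W 0%N) (W 1%N) (W 2%N) (W 3%N) (W 4%N).
Definition odd5 (g : vec -> vec -> vec -> vec -> vec -> R) W :=
  g (W 4%N) (W 3%N) (W 2%N) (W 1%N) (W 0%N).

Definition fac1 W := - even5 chi5_num W / even5 chi5_com W.
Definition fac2 W := - odd5 chi5_num W / odd5 chi5_com W.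
Definition fac3 W := even5 chi5_num W * odd5 chi5_den W / (even5 chi5_den W * odd5 chi5_num W).
Definition fac4 W := even5 chi5_com W * odd5 chi5_den W / (even5 chi5_den W * odd5 chi5_com W).

Local Notation "[ Q | a b c ]" := (det3 (Q a%N) (Q b%N) (Q c%N))
  (at level 0, Q at level 0, a at level 0, b at level 0, c at level 0).

Definition pot1 Q := [Q|0 1 3] * [Q|1 2 4] * [Q|2 3 5] / (lam Q 0 * [Q|1 2 3]).
Definition pot2 Q :=
  [Q|1 3 4] * [Q|0 1 2] * lam Q 2 / ([Q|0 1 4] * [Q|1 2 5] * [Q|2 3 6] * [Q|3 4 7]).
Definition pot3 Q :=
  [Q|0 3 6] * [Q|1 4 7] * ([Q|0 1 3] * [Q|1 2 4] * [Q|2 3 5]) ^+ 2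
  * ([Q|1 2 4] * [Q|2 3 5] * [Q|3 4 6])
  / (lam Q 0 * lam Q 1 * lam Q 2 * [Q|0 2 3] * [Q|1 3 4] ^+ 2 * [Q|0 1 2] * [Q|1 2 3]).
Definition pot4 Q :=
  [Q|0 1 3] * [Q|1 2 4] ^+ 2 * [Q|2 3 5] ^+ 2 * [Q|3 4 6] * [Q|0 3 6] * [Q|1 4 7]
  / (lam Q 1 * [Q|0 2 3] * [Q|1 3 4] * [Q|0 1 4] * [Q|1 2 5] * [Q|2 3 6] * [Q|3 4 7]).

Lemma even5_plucker W : even5 chi5_num W - even5 chi5_den W = - even5 chi5_com W.
Proof. exact: chi5_plucker. Qed.
Lemma odd5_plucker W : odd5 chi5_num W - odd5 chi5_den W = - odd5 chi5_com W.
Proof. exact: chi5_plucker. Qed.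

Lemma fac1_T3w Q : regular_window Q -> det3 (Q 1%N) (Q 4%N) (Q 7%N) != 0 ->
  fac1 (T3w Q) = fac1 Q * (pot1 (fun j => Q j.+1) / pot1 Q).
Proof.
move=> hQ ?; rewrite /fac1 /pot1 /even5 /chi5_num /chi5_com !lam_shift.
sort_brackets; expand_T3w; sort_brackets; regular_facts hQ; field_neq0.
Qed.

Lemma fac2_T3w Q : regular_window Q -> det3 (Q 1%N) (Q 4%N) (Q 7%N) != 0 ->
  fac2 (T3w Q) = fac2 Q * (pot2 (fun j => Q j.+1) / pot2 Q).
Proof.
move=> hQ ?; rewrite /fac2 /pot2 /odd5 /chi5_num /chi5_com !lam_shift.
sort_brackets; expand_T3w; sort_brackets; regular_facts hQ; field_neq0.
Qed.

Lemma fac3_T3w Q : regular_window Q ->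
  det3 (Q 0%N) (Q 3%N) (Q 6%N) != 0 -> det3 (Q 1%N) (Q 4%N) (Q 7%N) != 0 ->
  fac3 (T3w Q) = fac3 Q * (pot3 (fun j => Q j.+1) / pot3 Q).
Proof.
move=> hQ ? ?; rewrite /fac3 /pot3 /even5 /odd5 /chi5_num /chi5_den !lam_shift.
sort_brackets; expand_T3w; sort_brackets; regular_facts hQ; field_neq0.
Qed.

Lemma fac4_T3w Q : regular_window Q ->
  det3 (Q 0%N) (Q 3%N) (Q 6%N) != 0 -> det3 (Q 1%N) (Q 4%N) (Q 7%N) != 0 ->
  fac4 (T3w Q) = fac4 Q * (pot4 (fun j => Q j.+1) / pot4 Q).
Proof.
move=> hQ ? ?; rewrite /fac4 /pot4 /even5 /odd5 /chi5_com /chi5_den !lam_shift.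
sort_brackets; expand_T3w; sort_brackets; regular_facts hQ; field_neq0.
Qed.

Lemma even5_den_neq0 Q : regular_window Q -> even5 chi5_den Q != 0.
Proof. by move=> hQ; rewrite /even5 /chi5_den; regular_facts hQ; prove_neq0. Qed.

Lemma odd5_den_neq0 Q : regular_window Q -> odd5 chi5_den Q != 0.
Proof. by move=> hQ; rewrite /odd5 /chi5_den; sort_brackets; regular_facts hQ; prove_neq0. Qed.

Lemma even5_den_T3w Q : even5 chi5_den (T3w Q) != 0 ->
  det3 (Q 0%N) (Q 3%N) (Q 6%N) != 0 /\ det3 (Q 1%N) (Q 4%N) (Q 7%N) != 0.
Proof.
rewrite /even5 /chi5_den; sort_brackets; expand_T3w; sort_brackets => h.
by split_neq0; split.
Qed.

Lemma odd5_den_T3w Q : odd5 chi5_den (T3w Q) != 0 -> det3 (Q 1%N) (Q 4%N) (Q 7%N) != 0.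
Proof.
rewrite /odd5 /chi5_den; sort_brackets; expand_T3w; sort_brackets => h.
by split_neq0.
Qed.

Lemma pot1_neq0 Q : regular_window Q -> pot1 Q != 0.
Proof. by move=> hQ; rewrite /pot1; regular_facts hQ; prove_neq0. Qed.
Lemma pot2_neq0 Q : regular_window Q -> pot2 Q != 0.
Proof. by move=> hQ; rewrite /pot2; regular_facts hQ; prove_neq0. Qed.
Lemma pot3_neq0 Q : regular_window Q ->
  det3 (Q 0%N) (Q 3%N) (Q 6%N) != 0 -> det3 (Q 1%N) (Q 4%N) (Q 7%N) != 0 -> pot3 Q != 0.
Proof. by move=> hQ ? ?; rewrite /pot3; regular_facts hQ; prove_neq0. Qed.
Lemma pot4_neq0 Q : regular_window Q ->
  det3 (Q 0%N) (Q 3%N) (Q 6%N) != 0 -> det3 (Q 1%N) (Q 4%N) (Q 7%N) != 0 -> pot4 Q != 0.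
Proof. by move=> hQ ? ?; rewrite /pot4; regular_facts hQ; prove_neq0. Qed.

End LocalIdentities.

Arguments pot1 {R}.
Arguments pot2 {R}.
Arguments pot3 {R}.
Arguments pot4 {R}.

Section ProjectiveInvariance.
Variable R : realFieldType.
Local Notation vec := 'cV[R]_3.

(* The determinant, expanded so that [ring] and [field] can see through it. *)
Definition mxdet3 (M : 'M[R]_3) := M 0 0 * (M 1 1 * M 2 2 - M 1 2 * M 2 1)
  - M 0 1 * (M 1 0 * M 2 2 - M 1 2 * M 2 0) + M 0 2 * (M 1 0 * M 2 1 - M 1 1 * M 2 0).

Lemma det3_mulmx M (u v w : vec) :
  det3 (M *m u) (M *m v) (M *m w) = mxdet3 M * det3 u v w.
Proof. by rewrite !det3E !mxE !sum_ord3 /mxdet3; ring. Qed.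

Lemma mxdet3_1 : mxdet3 1%:M = 1.
Proof. by rewrite /mxdet3 !mxE /=; ring. Qed.

Definition proj_invariant (pot : (nat -> vec) -> R) :=
  forall Q Q' (s : nat -> R) M, regular_window Q -> (forall j, s j != 0) -> mxdet3 M != 0 ->
  (forall j, Q' j = s j *: (M *m Q j)) -> pot Q' = pot Q.

Lemma proj_invariant_ext pot Q Q' : proj_invariant pot -> regular_window Q ->
  Q' =1 Q -> pot Q' = pot Q.
Proof.
move=> inv hQ eQ; apply: (inv _ _ (fun=> 1) 1%:M hQ) => [_||j].
- exact: oner_neq0.
- by rewrite mxdet3_1 oner_neq0.
- by rewrite scale1r mul1mx eQ.
Qed.

Lemma lam_proj Q Q' (s : nat -> R) M j : (forall j, Q' j = s j *: (M *m Q j)) ->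
  lam Q' j = s j * s j.+1 * s j.+2 * s j.+3 * s j.+4 * s j.+5 * mxdet3 M ^+ 2 * lam Q j.
Proof. by move=> E; rewrite /lam !E !det3Z !det3_mulmx; ring. Qed.

Ltac proj_invariant_tac hQ hs E :=
  rewrite ?(lam_proj _ E) !E !det3Z !det3_mulmx;
  have := hs 0%N; have := hs 1%N; have := hs 2%N; have := hs 3%N;
  have := hs 4%N; have := hs 5%N; have := hs 6%N; have := hs 7%N;
  move=> *; regular_facts hQ; field_neq0.

Lemma pot1_proj_invariant : proj_invariant pot1.
Proof. by move=> Q Q' s M hQ hs hM E; rewrite /pot1; proj_invariant_tac hQ hs E. Qed.
Lemma pot2_proj_invariant : proj_invariant pot2.
Proof. by move=> Q Q' s M hQ hs hM E; rewrite /pot2; proj_invariant_tac hQ hs E. Qed.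
Lemma pot3_proj_invariant : proj_invariant pot3.
Proof. by move=> Q Q' s M hQ hs hM E; rewrite /pot3; proj_invariant_tac hQ hs E. Qed.
Lemma pot4_proj_invariant : proj_invariant pot4.
Proof. by move=> Q Q' s M hQ hs hM E; rewrite /pot4; proj_invariant_tac hQ hs E. Qed.

End ProjectiveInvariance.

Arguments pot1_proj_invariant {R}.
Arguments pot2_proj_invariant {R}.
Arguments pot3_proj_invariant {R}.
Arguments pot4_proj_invariant {R}.

Section IntegerWindows.
Variable R : realFieldType.
Local Notation vec := 'cV[R]_3.
Implicit Types (S : int -> vec) (W : nat -> vec).

Definition win S (k : int) : nat -> vec := fun j => S (k + j%:Z).

Lemma win_T3 S k : win (T3 S) k =1 T3w (win S k).
Proof. by move=> j; rewrite /win /T3 /T3w; congr meet; congr S; lia. Qed.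

Lemma xe_args_win S k : xe_args S (k + 2) =
  (win S k 0, win S k 1, meet (win S k 0) (win S k 1) (win S k 2) (win S k 3),
   meet (win S k 0) (win S k 1) (win S k 3) (win S k 4)).
Proof. by rewrite /xe_args /win; congr (_, _, meet _ _ _ _, meet _ _ _ _); congr S; lia. Qed.

Lemma xo_args_win S k : xo_args S (k + 2) =
  (win S k 4, win S k 3, meet (win S k 4) (win S k 3) (win S k 2) (win S k 1),
   meet (win S k 4) (win S k 3) (win S k 1) (win S k 0)).
Proof. by rewrite /xo_args /win; congr (_, _, meet _ _ _ _, meet _ _ _ _); congr S; lia. Qed.

Lemma xe_win S k W : win S k =1 W -> det3 (W 0%N) (W 1%N) (W 2%N) != 0 ->
  xe S (k + 2) = even5 chi5_num W / even5 chi5_den W.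
Proof. by move=> SW hW; rewrite /xe xe_args_win !SW /= chi_meet // (dotv_cross_neq0 hW). Qed.

Lemma xo_win S k W : win S k =1 W -> det3 (W 2%N) (W 3%N) (W 4%N) != 0 ->
  xo S (k + 2) = odd5 chi5_num W / odd5 chi5_den W.
Proof.
move=> SW hW; rewrite /xo xo_args_win !SW /= chi_meet //.
by apply: (dotv_cross_neq0 (c := W 2%N)); rewrite det3_swap12 -det3_rot oppr_eq0.
Qed.

Lemma xe_fin_win S k W : win S k =1 W -> xe_fin S (k + 2) -> even5 chi5_den W != 0.
Proof. by move=> SW; rewrite /xe_fin xe_args_win !SW => /chi_finite_meet. Qed.

Lemma xo_fin_win S k W : win S k =1 W -> xo_fin S (k + 2) -> odd5 chi5_den W != 0.
Proof. by move=> SW; rewrite /xo_fin xo_args_win !SW => /chi_finite_meet. Qed.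

End IntegerWindows.

Section TwistedPolygon.
Variables (R : realFieldType) (n : nat) (P : int -> 'cV[R]_3).
Hypotheses (hP : twisted_ngon n P) (hnice : nice3 P) (hT : twisted_ngon n (T3 P)).

Lemma regular_win k : regular_window (win P k).
Proof.
have idx (m j : nat) : k + m%:Z + j%:Z = k + (j + m)%:Z by lia.
split=> [m | m | m |].
- by have := hnice (k + m%:Z); rewrite (idx m 1%N) (idx m 3%N) (idx m 4%N).
- by have := hP.2 (k + m%:Z); rewrite (idx m 1%N) (idx m 2%N).
- have := hT.2 (k + m%:Z); rewrite (idx m 1%N) (idx m 2%N) -!/(win _ k _) !win_T3.
  by rewrite det3_T3w_012 mulf_eq0 negb_or => /andP[].
- have back (j : nat) : k - 1 + j.+1%:Z = k + j%:Z by lia.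
  by have [_ _ _] := hnice (k - 1); rewrite (back 0%N) (back 2%N) (back 3%N).
Qed.

Lemma proj_invariant_periodic pot k : proj_invariant pot ->
  pot (win P (k + n%:Z)) = pot (win P k).
Proof.
move=> inv; have [[M [_ hM]] _] := hP.
have ex (j : nat) : exists c, (c != 0) && (win P (k + n%:Z) j == c *: (M *m win P k j)).
  have [c [c0 e]] := hM (k + j%:Z); exists c.
  by rewrite c0 /win (_ : k + n%:Z + j%:Z = k + j%:Z + n%:Z) ?e ?eqxx //; lia.
pose s j := xchoose (ex j).
have s_neq0 j : s j != 0 by have /andP[] := xchooseP (ex j).
have E j : win P (k + n%:Z) j = s j *: (M *m win P k j).
  by have /andP[_ /eqP] := xchooseP (ex j).
apply: (inv _ _ s M (regular_win k) s_neq0) => //.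
have := rw_consec (regular_win (k + n%:Z)) 0; rewrite !E !det3Z det3_mulmx.
by apply: contraNneq => ->; rewrite mul0r mulr0.
Qed.

Lemma pot_win_succ pot k : proj_invariant pot ->
  pot (fun j => win P k j.+1) = pot (win P (k + 1)).
Proof.
move=> inv; apply: (proj_invariant_ext inv (regular_win _)) => j.
by rewrite /win; congr P; lia.
Qed.

Lemma prod_coboundary pot (f f' : int -> R) : proj_invariant pot ->
  (forall i : 'I_n, pot (win P (i%:Z - 2)) != 0) ->
  (forall i : 'I_n, f' (i%:Z - 2 + 2) =
     f (i%:Z - 2 + 2) * (pot (fun j => win P (i%:Z - 2) j.+1) / pot (win P (i%:Z - 2)))) ->
  \prod_(i < n) f' i = \prod_(i < n) f i.
Proof.
move=> inv pot_neq0 step; have [n0|n_gt0] := posnP n; first by rewrite n0 !big_ord0.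
pose h (m : nat) := pot (win P (m%:Z - 2)).
have fac_h (i : 'I_n) : f' i = f i * (h i.+1 / h i).
  have := step i; rewrite subrK => ->; rewrite pot_win_succ // /h.
  by congr (_ * (pot (win P _) / _)); lia.
rewrite (eq_bigr _ (fun i _ => fac_h i)) big_split /=.
rewrite -(big_mkord xpredT (fun i => h i.+1 / h i)) telescope_prodf //; last first.
  by move=> m /andP[_ lt_mn]; apply: (pot_neq0 (Ordinal lt_mn)).
have -> : h n = h 0%N.
  by rewrite /h -(proj_invariant_periodic (0%:Z - 2) inv); congr (pot (win P _)); lia.
by rewrite divff ?mulr1 //; apply: (pot_neq0 (Ordinal n_gt0)).
Qed.

Lemma xe_P k : xe P (k + 2) = even5 chi5_num (win P k) / even5 chi5_den (win P k).
Proof. exact: xe_win (frefl _) (rw_consec (regular_win k) 0). Qed.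
Lemma xo_P k : xo P (k + 2) = odd5 chi5_num (win P k) / odd5 chi5_den (win P k).
Proof. exact: xo_win (frefl _) (rw_consec (regular_win k) 2). Qed.

Lemma xe_T3P k :
  xe (T3 P) (k + 2) = even5 chi5_num (T3w (win P k)) / even5 chi5_den (T3w (win P k)).
Proof.
apply: xe_win (win_T3 P k) _.
by rewrite (det3_T3w_012 _ 0) mulf_neq0 // (rw_lam (regular_win k)).
Qed.
Lemma xo_T3P k :
  xo (T3 P) (k + 2) = odd5 chi5_num (T3w (win P k)) / odd5 chi5_den (T3w (win P k)).
Proof.
apply: xo_win (win_T3 P k) _.
by rewrite (det3_T3w_012 _ 2) mulf_neq0 // (rw_lam (regular_win k)).
Qed.

Lemma F1_factor_T3 k : xe_fin (T3 P) (k + 2) ->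
  xe (T3 P) (k + 2) / (xe (T3 P) (k + 2) - 1) =
  xe P (k + 2) / (xe P (k + 2) - 1) * (pot1 (fun j => win P k j.+1) / pot1 (win P k)).
Proof.
move=> /(xe_fin_win (win_T3 P k)) denT; have hQ := regular_win k.
rewrite xe_T3P xe_P !(div_div_subr1 (even5_plucker _)) ?denT ?(even5_den_neq0 hQ) //.
exact: fac1_T3w hQ (even5_den_T3w denT).2.
Qed.

Lemma F2_factor_T3 k : xo_fin (T3 P) (k + 2) ->
  xo (T3 P) (k + 2) / (xo (T3 P) (k + 2) - 1) =
  xo P (k + 2) / (xo P (k + 2) - 1) * (pot2 (fun j => win P k j.+1) / pot2 (win P k)).
Proof.
move=> /(xo_fin_win (win_T3 P k)) denT; have hQ := regular_win k.
rewrite xo_T3P xo_P !(div_div_subr1 (odd5_plucker _)) ?denT ?(odd5_den_neq0 hQ) //.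
exact: fac2_T3w hQ (odd5_den_T3w denT).
Qed.

Lemma F3_factor_T3 k : xe_fin (T3 P) (k + 2) -> xo_fin (T3 P) (k + 2) ->
  xe (T3 P) (k + 2) / xo (T3 P) (k + 2) =
  xe P (k + 2) / xo P (k + 2) * (pot3 (fun j => win P k j.+1) / pot3 (win P k)).
Proof.
move=> /(xe_fin_win (win_T3 P k)) /even5_den_T3w [diag0 diag1] _.
rewrite xe_T3P xo_T3P xe_P xo_P [LHS]divf_div [X in _ = X * _]divf_div.
exact: (fac3_T3w (regular_win k) diag0 diag1).
Qed.

Lemma F4_factor_T3 k : xe_fin (T3 P) (k + 2) -> xo_fin (T3 P) (k + 2) ->
  (1 - xe (T3 P) (k + 2)) / (1 - xo (T3 P) (k + 2)) =
  (1 - xe P (k + 2)) / (1 - xo P (k + 2)) * (pot4 (fun j => win P k j.+1) / pot4 (win P k)).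
Proof.
move=> /(xe_fin_win (win_T3 P k)) denTe /(xo_fin_win (win_T3 P k)) denTo.
have hQ := regular_win k; have [diag0 diag1] := even5_den_T3w denTe.
rewrite xe_T3P xo_T3P xe_P xo_P.
apply: etrans (subr1_div_ratio (even5_plucker _) (odd5_plucker _) denTe denTo) _.
rewrite (subr1_div_ratio (even5_plucker _) (odd5_plucker _) (even5_den_neq0 hQ)
  (odd5_den_neq0 hQ)).
exact: fac4_T3w hQ diag0 diag1.
Qed.

Lemma F1_T3 : F1_def n (T3 P) -> F1 n (T3 P) = F1 n P.
Proof.
move=> def; rewrite /F1; apply: (prod_coboundary (f := fun x => xe P x / (xe P x - 1))
  (f' := fun x => xe (T3 P) x / (xe (T3 P) x - 1)) pot1_proj_invariant) => i.
- exact: pot1_neq0 (regular_win _).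
- by apply: F1_factor_T3; rewrite subrK; case: (def i).
Qed.

Lemma F2_T3 : F2_def n (T3 P) -> F2 n (T3 P) = F2 n P.
Proof.
move=> def; rewrite /F2; apply: (prod_coboundary (f := fun x => xo P x / (xo P x - 1))
  (f' := fun x => xo (T3 P) x / (xo (T3 P) x - 1)) pot2_proj_invariant) => i.
- exact: pot2_neq0 (regular_win _).
- by apply: F2_factor_T3; rewrite subrK; case: (def i).
Qed.

Lemma F3_T3 : F3_def n (T3 P) -> F3 n (T3 P) = F3 n P.
Proof.
move=> def; rewrite /F3; apply: (prod_coboundary (f := fun x => xe P x / xo P x)
  (f' := fun x => xe (T3 P) x / xo (T3 P) x) pot3_proj_invariant) => i;
  have [fin_e fin_o] : xe_fin (T3 P) (i%:Z - 2 + 2) /\ xo_fin (T3 P) (i%:Z - 2 + 2)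
    by rewrite subrK; case: (def i).
- have [] := even5_den_T3w (xe_fin_win (win_T3 P _) fin_e).
  exact: pot3_neq0 (regular_win _).
- exact: (F3_factor_T3 fin_e fin_o).
Qed.

Lemma F4_T3 : F4_def n (T3 P) -> F4 n (T3 P) = F4 n P.
Proof.
move=> def; rewrite /F4; apply: (prod_coboundary (f := fun x => (1 - xe P x) / (1 - xo P x))
  (f' := fun x => (1 - xe (T3 P) x) / (1 - xo (T3 P) x)) pot4_proj_invariant) => i;
  have [fin_e fin_o] : xe_fin (T3 P) (i%:Z - 2 + 2) /\ xo_fin (T3 P) (i%:Z - 2 + 2)
    by rewrite subrK; case: (def i).
- have [] := even5_den_T3w (xe_fin_win (win_T3 P _) fin_e).
  exact: pot4_neq0 (regular_win _).
- exact: (F4_factor_T3 fin_e fin_o).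
Qed.

End TwistedPolygon.

Theorem mainTheorem17 (R : realFieldType) (n : nat) (P : int -> 'cV[R]_3) :
  twisted_ngon n P -> nice3 P -> twisted_ngon n (T3 P) ->
  [/\ (F1_def n P -> F1_def n (T3 P) -> F1 n (T3 P) = F1 n P),
      (F2_def n P -> F2_def n (T3 P) -> F2 n (T3 P) = F2 n P),
      (F3_def n P -> F3_def n (T3 P) -> F3 n (T3 P) = F3 n P) &
      (F4_def n P -> F4_def n (T3 P) -> F4 n (T3 P) = F4 n P)].
Proof.
move=> hP hnice hT.
by split=> _; [exact: F1_T3 | exact: F2_T3 | exact: F3_T3 | exact: F4_T3].
Qed.
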